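(* For each $k\in\mathbb{Z}_{\geq0}$, the set \[ S_k=\left\{F([u]):=\frac{\delta^l(l_u)[1\oplus\cdots\oplus1]}{|(\mathbb{Z}_{k+1})_u|\sqrt{|[u]|}}\ \middle|\ [u]\in [n]^{k+1}/\mathbb{Z}_{k+1}\right\}\subset\big[(\mathbb{C}^n)^{\otimes k}\big]^n \] (which is well defined, i.e. $F([u])$ does not depend on the representative $u$ of the orbit) is an orthonormal basis of the subspace $\delta^l\big((\mathbb{C}^l_{\langle n\rangle})_{k+1}\big)[1\oplus\cdots\oplus1]$ of $\mathcal{F}(\mathbb{C}^n)^n$.
   Context: Let $n\geq1$, $\{e_1,\dots,e_n\}$ an orthonormal basis of $\mathbb{C}^n$, $\{f_1,\dots,f_n\}$ the standard basis of $\mathbb{C}^n$. The full Fock space is $\mathcal{F}(\mathbb{C}^n)=\mathbb{C}1\oplus\bigoplus_{k\geq1}(\mathbb{C}^n)^{\otimes k}$. Let $[n]^k$ be the set of words $i_1\cdots i_k$ of length $k$ over $[n]=\{1,\dots,n\}$, $e_{i_1\cdots i_k}=e_{i_1}\otimes\cdots\otimes e_{i_k}$, $e_\epsilon=1$. Let $l_j$ be the left creation operator $l_je_w=e_{jw}$, and for a word $u=u_1\cdots u_p$ put $l_u=l_{u_1}\cdots l_{u_p}$. Let $\mathbb{C}^l_{\langle n\rangle}$ be the unital algebra generated by $l_1,\dots,l_n$ and $(\mathbb{C}^l_{\langle n\rangle})_{k+1}$ the linear span of the monomials $l_u$, $u\in[n]^{k+1}$. The cyclic gradient $\delta^l:\mathbb{C}^l_{\langle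 n\rangle}\to(\mathbb{C}^l_{\langle n\rangle})^n\cong\mathbb{C}^l_{\langle n\rangle}\otimes\mathbb{C}^n$ is the linear map with $\delta^l(l_{i_1}\cdots l_{i_p})=\sum_{j=1}^p l_{i_{j+1}}\cdots l_{i_p}l_{i_1}\cdots l_{i_{j-1}}\otimes f_{i_j}$. For $(x_1,\dots,x_n)$ a tuple of operators, $(x_1,\dots,x_n)[1\oplus\cdots\oplus1]=(x_11,\dots,x_n1)\in\mathcal{F}(\mathbb{C}^n)^n$; for a subspace $V$ of tuples, $V[1\oplus\cdots\oplus1]$ is the set of such images. The cyclic group $\mathbb{Z}_{k}=\mathbb{Z}/k\mathbb{Z}$ acts on $[n]^{k}$ via the rotation $R(i_1\cdots i_{k-1}i_k)=i_ki_1\cdots i_{k-1}$; $[u]$ denotes the orbit of $u$, $|[u]|$ its cardinality, $(\mathbb{Z}_k)_u=\{g\in\mathbb{Z}_k: gu=u\}$ the stabilizer, and $[n]^k/\mathbb{Z}_k$ the set of orbits. *)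

From HB Require Import structures.
From mathcomp Require Import all_boot all_order all_algebra.
Set Implicit Arguments. Unset Strict Implicit. Unset Printing Implicit Defensive.
Import Order.TTheory GRing.Theory Num.Theory.
Local Open Scope ring_scope.

(* Scalars: an arbitrary numClosedFieldType C (e.g. the complex numbers);
   conjugation is Num.conj (notation z^* ). *)

(* Words over [n] are sequences of 'I_n; the letter i (0-based) stands for i+1. *)

(* The cyclic gradient of a monomial l_u, as a formal sum of terms
   (l_w, f_i) = l_w (x) f_i:
   delta^l (l_{u_1}..l_{u_p}) = sum_j l_{u_{j+1}..u_p u_1..u_{j-1}} (x) f_{u_j}. *)
Definition cyc_grad (n : nat) (u : seq 'I_n) : seq (seq 'I_n * 'I_n) :=
  [seq (drop j.+1 u ++ take j u, tnth (in_tuple u) j) | j : 'I_(size u) <- enum 'I_(size u)].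

(* The degree-k part of the n-fold direct sum F(C^n)^n, i.e. [(C^n)^{(x)k}]^n,
   in coordinates w.r.t. the orthonormal basis (e_w)_{w in [n]^k} in each
   of the n summands: a vector is a function (i, w) |-> coefficient of e_w in
   the i-th summand. *)
Definition fockn (C : numClosedFieldType) (n k : nat) :=
  {ffun 'I_n * k.-tuple 'I_n -> C^o}.

(* Evaluation of a formal sum sum_t l_{w_t} (x) f_{i_t} at 1 (+) ... (+) 1:
   its i-th component is sum_{t : i_t = i} l_{w_t} 1 = sum_{t : i_t = i} e_{w_t}. *)
Definition eval_one (C : numClosedFieldType) (n k : nat)
    (x : seq (seq 'I_n * 'I_n)) : fockn C n k :=
  [ffun p => \sum_(t <- x) ((t.2 == p.1) && (t.1 == val p.2))%:R].

Definition dl_one (C : numClosedFieldType) (n k : nat) (u : k.+1.-tuple 'I_n)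
  : fockn C n k := eval_one C k (cyc_grad u).

Definition fdot (C : numClosedFieldType) (n k : nat) (x y : fockn C n k) : C :=
  \sum_p (x p : C) * (y p : C)^*.

Definition words (n m : nat) : seq (m.-tuple 'I_n) := enum {: m.-tuple 'I_n}.

Definition rotR (n m : nat) (u : m.-tuple 'I_n) : m.-tuple 'I_n :=
  [tuple of rotr 1 u].

Definition zact (n k : nat) (g : 'I_k.+1) (u : k.+1.-tuple 'I_n) :=
  iter g (@rotR n k.+1) u.

Definition orbit_of (n k : nat) (u : k.+1.-tuple 'I_n) : {set k.+1.-tuple 'I_n} :=
  [set zact g u | g : 'I_k.+1].

Definition stab (n k : nat) (u : k.+1.-tuple 'I_n) : {set 'I_k.+1} :=
  [set g : 'I_k.+1 | zact g u == u].

Definition Fvec (C : numClosedFieldType) (n k : nat) (u : k.+1.-tuple 'I_n)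
  : fockn C n k :=
  ((#|stab u|%:R * sqrtC (#|orbit_of u|%:R))^-1 : C) *: dl_one C u.

(* The subspace delta^l((C^l_<n>)_{k+1})[1 (+) ... (+) 1]: the span of the
   images of the monomials l_u, u in [n]^{k+1} *)
Definition Vk (C : numClosedFieldType) (n k : nat) : {vspace fockn C n k} :=
  <<[seq dl_one C u | u <- words n k.+1]>>%VS.

Definition Sk (C : numClosedFieldType) (n k : nat) : seq (fockn C n k) :=
  undup [seq Fvec C u | u <- words n k.+1].

From HB Require Import structures.
From mathcomp Require Import all_boot all_order all_algebra.
From mathcomp Require Import ring.
Import Order.TTheory GRing.Theory Num.Theory.
Local Open Scope ring_scope.
Set Implicit Arguments. Unset Strict Implicit.

(* The j-th term of the cyclic gradient of l_u is l_{u_(j+1)..u_(k+1) u_1..u_(j-1)}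
   (x) f_(u_j), and u_j u_(j+1) .. u_(j-1) is the j-th rotation of u.  Hence the
   (i, w)-coordinate of delta^l(l_u)[1 (+) .. (+) 1] counts the rotations of u
   equal to the word i w, i.e. it is |stab u| if i w lies in the orbit [u] and 0
   otherwise.  Vectors attached to different orbits therefore have disjoint
   supports, and the vector attached to u has squared norm |[u]| |stab u|^2,
   which the normalisation of F([u]) cancels.  Orthonormal vectors are free, and
   F([u]) is a nonzero multiple of delta^l(l_u)[1 (+) .. (+) 1], so S_k spans the
   subspace. *)

Lemma free_biorthogonal (K : fieldType) (V : vectType K) (X : seq V)
    (phi : V -> {scalar V}) :
  uniq X -> {in X &, forall x y, phi y x = (x == y)%:R} -> free X.
Proof.
move=> uX phiX; suff: free (in_tuple X) by [].
apply/freeP => a sum0 i; move/(congr1 (phi X`_i)): sum0.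
rewrite linear_sum linear0 (bigD1 i) //= big1 => [|j ji].
  by rewrite scalarZ phiX ?mem_nth // eqxx mulr1 addr0.
by rewrite scalarZ phiX ?mem_nth // nth_uniq // val_eqE (negPf ji) mulr0.
Qed.

Section Rotation.
Variables n m : nat.
Local Notation rotR := (@rotR n m).

Lemma rot_iter_rotR j (u : m.-tuple 'I_n) : (j <= m)%N -> rot j (iter j rotR u) = u.
Proof.
elim: j => [|j IH] lt_jm /=; first exact: rot0.
by rewrite -addn1 rotD ?size_tuple ?addn1 // rotrK IH // ltnW.
Qed.

Lemma val_iter_rotR j (u : m.-tuple 'I_n) :
  (j <= m)%N -> val (iter j rotR u) = rotr j u.
Proof. by move=> le_jm; rewrite -(rot_iter_rotR u le_jm) rotK. Qed.

Lemma iter_rotR_mod j (u : m.-tuple 'I_n) : iter (j %% m) rotR u = iter j rotR u.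
Proof.
have period v : iter m rotR v = v.
  apply: val_inj; rewrite -[RHS](rot_iter_rotR v (leqnn m)).
  by rewrite rot_oversize ?size_tuple.
by rewrite {2}(divn_eq j m) iterD iterM (iter_fix _ (period _)).
Qed.

End Rotation.

Section CyclicAction.
Variables n k : nat.
Local Notation word := (k.+1.-tuple 'I_n).

Lemma zactD (g h : 'I_k.+1) (u : word) : zact (g + h) u = zact g (zact h u).
Proof. by rewrite /zact -iterD -[RHS]iter_rotR_mod. Qed.

Lemma zactC (g h : 'I_k.+1) (u : word) : zact g (zact h u) = zact h (zact g u).
Proof. by rewrite -!zactD addrC. Qed.

Lemma zactK (g : 'I_k.+1) : cancel (@zact n k g) (zact (- g)).
Proof. by move=> u; rewrite -zactD addNr. Qed.

Lemma zact_inj (g : 'I_k.+1) : injective (@zact n k g).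
Proof. exact: can_inj (zactK g). Qed.

Lemma val_zact (g : 'I_k.+1) (u : word) : val (zact g u) = rot (- g) u.
Proof.
rewrite /zact val_iter_rotR 1?ltnW // /rotr size_tuple /=.
case: g => [[|g] hg] /=.
  by rewrite subn0 modnn rot0 -{1}(size_tuple u) rot_size.
by rewrite modn_small // subSS ltnS leq_subr.
Qed.

Definition nmove (u w : word) : nat := #|[set g : 'I_k.+1 | zact g u == w]|.

Lemma mem_orbit_of (g : 'I_k.+1) (u : word) : zact g u \in orbit_of u.
Proof. exact: imset_f. Qed.

Lemma orbit_of_refl (u : word) : u \in orbit_of u.
Proof. exact: (mem_orbit_of 0). Qed.

Lemma eq_orbit_of (u v : word) : v \in orbit_of u -> orbit_of v = orbit_of u.
Proof.
case/imsetP => h _ ->; apply/setP => w.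
apply/imsetP/imsetP => -[g _ ->]; first by exists (g + h); rewrite ?zactD.
by exists (g - h); rewrite // -zactD subrK.
Qed.

Lemma eq_stab (u v : word) : v \in orbit_of u -> stab v = stab u.
Proof.
case/imsetP => h _ ->; apply/setP => g.
by rewrite !inE zactC (inj_eq (@zact_inj h)).
Qed.

Lemma stab_gt0 (u : word) : (0 < #|stab u|)%N.
Proof. by apply/card_gt0P; exists 0; rewrite inE. Qed.

Lemma orbit_of_gt0 (u : word) : (0 < #|orbit_of u|)%N.
Proof. by apply/card_gt0P; exists u; rewrite orbit_of_refl. Qed.

Lemma nmoveE (u w : word) :
  nmove u w = if w \in orbit_of u then #|stab u| else 0%N.
Proof.
case: ifP => [/imsetP[h _ ->]|wu].
  rewrite /nmove -(card_preimset _ (addIr h)); apply: eq_card => g.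
  by rewrite !inE zactD zactC (inj_eq (@zact_inj h)).
apply/eqP; rewrite cards_eq0; apply/eqP/setP => g; rewrite !inE.
by apply: contraFF wu => /eqP <-; apply: mem_orbit_of.
Qed.

Lemma eq_nmove (u v : word) : v \in orbit_of u -> nmove v =1 nmove u.
Proof. by move=> vu w; rewrite !nmoveE (eq_orbit_of vu) (eq_stab vu). Qed.

Lemma sum_nmoveM (u v : word) :
  (\sum_w nmove u w * nmove v w =
   if v \in orbit_of u then #|orbit_of u| * #|stab u| ^ 2 else 0)%N.
Proof.
case: ifP => vu.
  rewrite -sum_nat_const [RHS]big_mkcond; apply: eq_bigr => w _.
  by rewrite (eq_nmove vu) nmoveE; case: ifP.
apply: big1 => w _; rewrite !nmoveE.
case: ifP => // wu; case: ifP => [wv|]; last by rewrite muln0.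
by rewrite -(eq_orbit_of wu) (eq_orbit_of wv) orbit_of_refl in vu.
Qed.

Lemma nmove_rot (u w : word) : nmove u w = (\sum_(j < k.+1) (rot j u == w))%N.
Proof.
rewrite /nmove -sum1_card big_mkcond /= (reindex_inj (@oppr_inj _)) /=.
by apply: eq_bigr => g _; rewrite inE -val_eqE val_zact opprK; case: (_ == _).
Qed.

End CyclicAction.

Section FockVectors.
Variables (C : numClosedFieldType) (n k : nat).
Local Notation word := (k.+1.-tuple 'I_n).

Definition cons_word (p : 'I_n * k.-tuple 'I_n) : word := cons_tuple p.1 p.2.

Lemma sum_cons_word (F : word -> C) : \sum_p F (cons_word p) = \sum_w F w.
Proof.
symmetry; rewrite (reindex cons_word) //.
exists (fun w : word => (thead w, [tuple of behead w])).
  by move=> [i w] _; congr pair; apply: val_inj.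
by move=> w _; apply: val_inj; rewrite /= [in RHS](tuple_eta w).
Qed.

Lemma dl_oneE (u : word) p : dl_one C u p = (nmove u (cons_word p))%:R.
Proof.
rewrite /dl_one /eval_one ffunE /cyc_grad big_map big_enum /= nmove_rot -natr_sum.
rewrite -(big_mkord xpredT (fun j => (rot j u == cons_word p : nat))).
rewrite -[X in \sum_(0 <= _ < X) _](size_tuple u) big_mkord.
congr _%:R; apply: eq_bigr => j _.
have x0 := tnth u ord0.
by rewrite /rot [drop j u](drop_nth x0) ?ltn_ord // (tnth_nth x0).
Qed.

Definition Fscale (u : word) : C := (#|stab u|%:R * sqrtC #|orbit_of u|%:R)^-1.

Lemma Fscale_ge0 (u : word) : 0 <= Fscale u.
Proof. by rewrite invr_ge0 mulr_ge0 ?ler0n ?sqrtC_ge0. Qed.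

Lemma Fscale_neq0 (u : word) : Fscale u != 0.
Proof.
rewrite invr_eq0 mulf_neq0 // ?pnatr_eq0 -?lt0n ?stab_gt0 //.
by rewrite sqrtC_eq0 pnatr_eq0 -lt0n orbit_of_gt0.
Qed.

Lemma FvecE (u : word) p : Fvec C u p = Fscale u * (nmove u (cons_word p))%:R.
Proof. by rewrite /Fvec ffunE dl_oneE. Qed.

Lemma Fvec_orbit (u v : word) : v \in orbit_of u -> Fvec C v = Fvec C u.
Proof.
move=> vu; apply/ffunP => p.
by rewrite !FvecE (eq_nmove vu) /Fscale (eq_stab vu) (eq_orbit_of vu).
Qed.

Lemma fdot_Fvec (u v : word) : fdot (Fvec C u) (Fvec C v) = (v \in orbit_of u)%:R.
Proof.
have -> : fdot (Fvec C u) (Fvec C v) =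
    Fscale u * Fscale v * (\sum_w nmove u w * nmove v w)%:R.
  rewrite /fdot natr_sum mulr_sumr -sum_cons_word; apply: eq_bigr => p _.
  by rewrite !FvecE rmorphM /= conjC_nat (geC0_conj (Fscale_ge0 v)) natrM; ring.
rewrite sum_nmoveM; case: ifP => vu; last by rewrite mulr0.
have := Fscale_neq0 u; rewrite /Fscale (eq_stab vu) (eq_orbit_of vu) invr_eq0.
set s := (#|stab u|%:R : C); set o := (#|orbit_of u|%:R : C) => nz.
have -> : (#|orbit_of u| * #|stab u| ^ 2)%:R = s * sqrtC o * (s * sqrtC o).
  by rewrite natrM natrX -/s -/o -[o in LHS]sqrtCK; ring.
by rewrite -invfM mulVf // mulf_neq0.
Qed.

Lemma Fvec_eq (u v : word) : (Fvec C u == Fvec C v) = (v \in orbit_of u).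
Proof.
apply/eqP/idP => [Fuv|vu]; last by rewrite (Fvec_orbit vu).
have := fdot_Fvec u v; rewrite -Fuv fdot_Fvec orbit_of_refl.
by case: (v \in orbit_of u) => // /eqP; rewrite oner_eq0.
Qed.

Lemma fdot_Sk : {in Sk C n k &, forall x y, fdot x y = (x == y)%:R}.
Proof.
move=> x y; rewrite !mem_undup => /mapP[u _ ->] /mapP[v _ ->].
by rewrite fdot_Fvec Fvec_eq.
Qed.

Definition fdotr (y x : fockn C n k) : C := fdot x y.

Fact fdotr_is_scalar y : scalar (fdotr y).
Proof.
move=> a x z; rewrite /fdotr /fdot mulr_sumr -big_split; apply: eq_bigr => p _.
by rewrite !ffunE mulrDl mulrA.
Qed.

HB.instance Definition _ y :=
  GRing.isLinear.Build C (fockn C n k) C *%R (fdotr y) (fdotr_is_scalar y).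

Lemma Sk_free : free (Sk C n k).
Proof. exact: (free_biorthogonal (phi := fdotr)) (undup_uniq _) fdot_Sk. Qed.

Lemma span_Sk : (<<Sk C n k>> = Vk C n k)%VS.
Proof.
have mem_words u : u \in words n k.+1 by rewrite mem_enum.
apply/eqP; rewrite eqEsubv; apply/andP; split; apply/span_subvP => x.
  rewrite mem_undup => /mapP[u _ ->].
  by apply/memvZ/memv_span/map_f.
case/mapP => u _ ->.
have -> : dl_one C u = (Fscale u)^-1 *: Fvec C u.
  by rewrite scalerA mulVf ?scale1r ?Fscale_neq0.
by apply/memvZ/memv_span; rewrite mem_undup map_f.
Qed.

End FockVectors.

Unset Implicit Arguments. Set Strict Implicit.

Theorem theorem3p1 (C : numClosedFieldType) (n : nat) (hn : (0 < n)%N) (k : nat) :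
  (* well-definedness: F([u]) does not depend on the representative *)
  (forall u v : k.+1.-tuple 'I_n, v \in orbit_of u -> Fvec C v = Fvec C u)
  (* orthonormality, indexed by orbits *)
  /\ (forall u v : k.+1.-tuple 'I_n,
        fdot (Fvec C u) (Fvec C v) = (v \in orbit_of u)%:R)
  (* S_k is a basis of the subspace *)
  /\ basis_of (Vk C n k) (Sk C n k).
Proof.
split; first exact: Fvec_orbit.
split; first exact: fdot_Fvec.
by rewrite /basis_of span_Sk eqxx Sk_free.
Qed.
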